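(* Let $X$ and $Y$ be $\emptyset$-hyperdefinable sets with $X\perp_\emptyset Y$. Let $A\subseteq X^{heq}\cup Y^{heq}$, and let $X'\subseteq X^{heq}$ and $Y'\subseteq Y^{heq}$ be hyperdefinable over $A$. Then $X'\perp_A Y'$.
   Context: Work in a $\kappa$-saturated, strongly $\kappa$-homogeneous monster model $\mathfrak M$ for a very large $\kappa$; ''bounded'' means of cardinality $<\kappa$. A countable equivalence relation over $A$ is an equivalence relation given by a conjunction of countably many formulas over $A$ (in countably many variables). A hyperimaginary of type $E$ is the class $a_E$ of a tuple $a$ modulo a countable equivalence relation $E$ over $\emptyset$; tuples (possibly infinite) of hyperimaginaries are allowed, and all tuples and parameter sets are hyperimaginary unless otherwise stated. A hyperimaginary $e$ is definable (resp. bounded) over a set $B$ of hyperimaginaries if every automorphism of $\mathfrak M$ fixing $B$ pointwise fixes $e$ (resp. the orbit of $e$ under such automorphisms is bounded); $\mathrm{dcl}^{heq}(B)$ and $\mathrm{bdd}(B)$ denote the sets of hyperimaginaries definable, resp. bounded, over $B$. Two tuples of hyperimaginaries have the same type over $B$ iff they are conjugate by an automorphism fixing $B$ pointwise. A set $X$ is hyperdefinable over $A$ if $X=Z/E$ where $Z$ is type-definable over $A$ in countably many variables and $E$ is a countable equivalence relation on $Z$ over $A$. For $X$ hyperdefinable over $\emptyset$, $X^{heq}$ is the set of hyperimaginaries in $\mathrm{dcl}^{heq}(x)$ for tuples $x$ from $X$. $X\perp_A Y$ (orthogonality over $A$) means: for all tuples $a$ from $X$ and $b$ from $Y$, $\mathrm{tp}(a/A)\cup\mathrm{tp}(b/A)\vdash\mathrm{tp}(ab/A)$.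 *)

From Stdlib Require Import List Arith Bool.
From Stdlib Require Vectors.Fin.

Set Implicit Arguments.

Record Language := {
  Func : Type; farity : Func -> nat;
  Rel : Type;  rarity : Rel -> nat }.

Record Structure (L : Language) := {
  carrier :> Type;
  fun_i : forall f : Func L, (Fin.t (farity L f) -> carrier) -> carrier;
  rel_i : forall r : Rel L, (Fin.t (rarity L r) -> carrier) -> Prop }.

Definition lt_card (S K : Type) : Prop :=
  (exists f : S -> K, forall x y, f x = f y -> x = y) /\
  ~ (exists g : K -> S, forall x y, g x = g y -> x = y).

Section Model.
Context {L : Language} {M : Structure L}.

Inductive term : Type :=
| tvar (n : nat)
| tpar (m : M)
| tapp (f : Func L) (args : Fin.t (farity L f) -> term).

Inductive formula : Type :=
| fEq (t s : term)
| fRel (r : Rel L) (args : Fin.t (rarity L r) -> term)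
| fNeg (phi : formula)
| fAnd (phi psi : formula)
| fEx (n : nat) (phi : formula).

Definition upd (v : nat -> M) (n : nat) (m : M) : nat -> M :=
  fun k => if Nat.eqb k n then m else v k.

Fixpoint eval (v : nat -> M) (t : term) : M :=
  match t with
  | tvar n => v n
  | tpar m => m
  | tapp f args => fun_i M f (fun i => eval v (args i))
  end.

Fixpoint sat (v : nat -> M) (phi : formula) : Prop :=
  match phi with
  | fEq t s => eval v t = eval v s
  | fRel r args => rel_i M r (fun i => eval v (args i))
  | fNeg p => ~ sat v p
  | fAnd p q => sat v p /\ sat v q
  | fEx n p => exists m, sat (upd v n m) p
  end.

Fixpoint term_params (t : term) (m : M) : Prop :=
  match t with
  | tvar _ => False
  | tpar p => p = m
  | tapp f args => exists i, term_params (args i) m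
  end.

Fixpoint params (phi : formula) (m : M) : Prop :=
  match phi with
  | fEq t s => term_params t m \/ term_params s m
  | fRel r args => exists i, term_params (args i) m
  | fNeg p => params p m
  | fAnd p q => params p m \/ params q m
  | fEx _ p => params p m
  end.

Fixpoint map_term (g : M -> M) (t : term) : term :=
  match t with
  | tvar n => tvar n
  | tpar p => tpar (g p)
  | tapp f args => tapp f (fun i => map_term g (args i))
  end.

Fixpoint map_params (g : M -> M) (phi : formula) : formula :=
  match phi with
  | fEq t s => fEq (map_term g t) (map_term g s)
  | fRel r args => fRel r (fun i => map_term g (args i))
  | fNeg p => fNeg (map_params g p)
  | fAnd p q => fAnd (map_params g p) (map_params g q)
  | fEx n p => fEx n (map_params g p)
  end.

Definition param_free (phi : formula) : Prop := forall m, ~ params phi m.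

Definition pairv (x y : nat -> M) : nat -> M :=
  fun n => if Nat.even n then x (Nat.div2 n) else y (Nat.div2 n).

Definition is_aut (s : M -> M) : Prop :=
  (exists t : M -> M, (forall m, s (t m) = m) /\ (forall m, t (s m) = m)) /\
  (forall f args, s (fun_i M f args) = fun_i M f (fun i => s (args i))) /\
  (forall r args, rel_i M r args <-> rel_i M r (fun i => s (args i))).

Section Kappa.
Variable K : Type.  (* a type of cardinality kappa *)

Definition small (P : M -> Prop) : Prop := lt_card {m : M | P m} K.

Definition saturated : Prop :=
  forall (P : M -> Prop), small P ->
  forall (Sigma : formula -> Prop),
    (forall phi, Sigma phi -> forall m, params phi m -> P m) ->
    (forall l : list formula, (forall phi, In phi l -> Sigma phi) ->
        exists v, forall phi, In phi l -> sat v phi) ->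
    exists v, forall phi, Sigma phi -> sat v phi.

Definition elementary_on (P : M -> Prop) (g : M -> M) : Prop :=
  forall phi, (forall m, params phi m -> P m) ->
    ((forall v, sat v phi) <-> (forall v, sat v (map_params g phi))).

Definition strongly_homogeneous : Prop :=
  forall (P : M -> Prop), small P -> forall g : M -> M, elementary_on P g ->
    exists s, is_aut s /\ forall m, P m -> s m = g m.

Definition regular_card : Prop :=
  forall (I : Type) (S : I -> Type), lt_card I K ->
    (forall i, lt_card (S i) K) -> lt_card {i : I & S i} K.

Definition monster : Prop :=
  lt_card nat K /\ lt_card (Func L + Rel L) K /\ regular_card /\
  saturated /\ strongly_homogeneous.

Definition trel := (nat -> M) -> (nat -> M) -> Prop.

(* class of hrep modulo hrel *)
Record Himag := mkH { hrel : trel; hrep : nat -> M }.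

Definition act (s : M -> M) (h : Himag) : Himag :=
  mkH (hrel h) (fun n => s (hrep h n)).

Definition heq (h1 h2 : Himag) : Prop :=
  hrel h1 = hrel h2 /\ hrel h1 (hrep h1) (hrep h2).

Definition fixes (s : M -> M) (h : Himag) : Prop := heq (act s h) h.

Definition countable_rel0 (E : trel) : Prop :=
  exists phis : nat -> formula, (forall n, param_free (phis n)) /\
    forall x y, E x y <-> forall n, sat (pairv x y) (phis n).

Definition equiv_on (Z : (nat -> M) -> Prop) (E : trel) : Prop :=
  (forall x, Z x -> E x x) /\
  (forall x y, Z x -> Z y -> E x y -> E y x) /\
  (forall x y z, Z x -> Z y -> Z z -> E x y -> E y z -> E x z).

Definition is_himag (h : Himag) : Prop :=
  countable_rel0 (hrel h) /\ equiv_on (fun _ => True) (hrel h).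

Record HTuple := { idx : Type; elt : idx -> Himag }.

Definition fixes_tuple (s : M -> M) (B : HTuple) : Prop :=
  forall i, fixes s (elt B i).

Definition same_type (B : HTuple) {I : Type} (a a' : I -> Himag) : Prop :=
  exists s, is_aut s /\ fixes_tuple s B /\ forall i, heq (act s (a i)) (a' i).

Definition definable_over (B : HTuple) (e : Himag) : Prop :=
  forall s, is_aut s -> fixes_tuple s B -> fixes s e.

Definition join {I J : Type} (a : I -> Himag) (b : J -> Himag) : I + J -> Himag :=
  fun k => match k with inl i => a i | inr j => b j end.

Definition empty_tuple : HTuple := {| idx := Empty_set; elt := fun e => match e with end |}.

Definition typedef0 (Z : (nat -> M) -> Prop) : Prop :=
  exists Sigma : formula -> Prop, (forall phi, Sigma phi -> param_free phi) /\
    forall x, Z x <-> forall phi, Sigma phi -> sat x phi.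

(* type-definable over a (small) set A of hyperimaginaries: type-definable
   with (small) real parameters and Aut(M/A)-invariant *)
Definition typedef_over (A : HTuple) (Z : (nat -> M) -> Prop) : Prop :=
  (exists P : M -> Prop, small P /\ exists Sigma : formula -> Prop,
     (forall phi, Sigma phi -> forall m, params phi m -> P m) /\
     forall x, Z x <-> forall phi, Sigma phi -> sat x phi) /\
  (forall s, is_aut s -> fixes_tuple s A ->
     forall x, Z x -> Z (fun n => s (x n))).

Definition countable_rel_over (A : HTuple) (E : trel) : Prop :=
  (exists phis : nat -> formula,
     forall x y, E x y <-> forall n, sat (pairv x y) (phis n)) /\
  (forall s, is_aut s -> fixes_tuple s A ->
     forall x y, E x y -> E (fun n => s (x n)) (fun n => s (y n))).

Record HDef := { HZ : (nat -> M) -> Prop; HE : trel }.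

Definition hyperdef0 (X : HDef) : Prop :=
  typedef0 (HZ X) /\ countable_rel0 (HE X) /\ equiv_on (HZ X) (HE X).

(* the elements of X = Z/E : E-classes of elements of Z *)
Definition in_X (X : HDef) (h : Himag) : Prop :=
  hrel h = HE X /\ HZ X (hrep h).

Definition heq_of (X : HDef) (e : Himag) : Prop :=
  is_himag e /\ exists (I : Type) (x : I -> Himag),
    lt_card I K /\ (forall i, in_X X (x i)) /\
    definable_over {| idx := I; elt := x |} e.

(* a set X' of hyperimaginaries is hyperdefinable over A: it is identified,
   Aut(M/A)-equivariantly, with Z'/E' for Z' type-definable over A and E' a
   countable equivalence relation on Z' over A *)
Definition hyperdef_over (A : HTuple) (X' : Himag -> Prop) : Prop :=
  exists (Z' : (nat -> M) -> Prop) (E' : trel) (pi : (nat -> M) -> Himag),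
    typedef_over A Z' /\ countable_rel_over A E' /\ equiv_on Z' E' /\
    (forall a, Z' a -> X' (pi a)) /\
    (forall h, X' h -> exists a, Z' a /\ heq (pi a) h) /\
    (forall a b, Z' a -> Z' b -> (heq (pi a) (pi b) <-> E' a b)) /\
    (forall s, is_aut s -> fixes_tuple s A ->
       forall a, Z' a -> heq (act s (pi a)) (pi (fun n => s (a n)))).

Definition orth (B : HTuple) (Xs Ys : Himag -> Prop) : Prop :=
  forall (I J : Type) (a : I -> Himag) (b : J -> Himag),
    lt_card I K -> lt_card J K ->
    (forall i, Xs (a i)) -> (forall j, Ys (b j)) ->
    forall (a' : I -> Himag) (b' : J -> Himag),
      same_type B a a' -> same_type B b b' ->
      same_type B (join a b) (join a' b').

End Kappa.
End Model.

(* Orthogonality passes to imaginary sorts and survives adding parameters.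

   Say that automorphisms r and s agree on a hyperimaginary h when r(h) = s(h).
   The proof has two independent steps.
   (1) Transfer to X^heq and Y^heq over the empty set.  Automorphisms preserve
       parameter-free formulas, hence every countable equivalence relation over
       the empty set.  If r and s agree on a tuple x, then s^-1 r fixes x, so it
       fixes every e definable over x: r and s agree on e.  Given tuples c from
       X^heq and d from Y^heq moved by s and t, choose small tuples x from X and
       y from Y over which they are definable; X _|_ Y yields a single r
       agreeing with s on x and with t on y, hence with s on c and t on d.
   (2) Adding parameters.  If Xs _|_ Ys over the empty set and each element of
       the small set A lies in Xs or in Ys, then X' _|_ Y' over A for all
       X' <= Xs and Y' <= Ys: append to a (resp. b) the part of A lying in Xs
       (resp. Ys) and apply orthogonality over the empty set. *)
From Stdlib Require Import Bool.
From Stdlib Require Import FunctionalExtensionality ClassicalEpsilon ProofIrrelevance Eqdep_dec.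

Section Automorphisms.
Context {L : Language} {M : Structure L}.

Lemma eval_aut (s : M -> M) (v : nat -> M) (t : @term L M) :
  is_aut s -> (forall m, ~ term_params t m) ->
  eval (fun n => s (v n)) t = s (eval v t).
Proof.
  intros Hs; induction t as [n | m | f args IH]; simpl; intros Hp.
  - reflexivity.
  - exfalso; apply (Hp m); reflexivity.
  - destruct Hs as [_ [Hf _]]. rewrite Hf. f_equal.
    apply functional_extensionality; intro i. apply IH.
    intros m Hm; apply (Hp m); exists i; exact Hm.
Qed.

Lemma sat_aut (s : M -> M) : is_aut s -> forall (phi : @formula L M) v,
  param_free phi -> (sat (fun n => s (v n)) phi <-> sat v phi).
Proof.
  intros Hs. pose proof Hs as [[t [Hst Hts]] [_ Hr]].
  induction phi as [u w | r args | phi IH | phi1 IH1 phi2 IH2 | n phi IH];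
    intros v Hp; simpl.
  - rewrite !eval_aut by (auto; intros m Hm; apply (Hp m); simpl; auto).
    split; intro H.
    + rewrite <- (Hts (eval v u)), <- (Hts (eval v w)), H; reflexivity.
    + rewrite H; reflexivity.
  - assert (Hargs : (fun i => eval (fun n => s (v n)) (args i))
                    = (fun i => s (eval v (args i)))).
    { apply functional_extensionality; intro i. apply eval_aut; auto.
      intros m Hm; apply (Hp m); simpl; exists i; exact Hm. }
    rewrite Hargs. split; apply Hr.
  - rewrite IH; [tauto|]. intros m Hm; apply (Hp m); exact Hm.
  - rewrite IH1, IH2; [tauto| |]; intros m Hm; apply (Hp m); simpl; auto.
  - assert (Hp' : param_free phi) by (intros m Hm; apply (Hp m); exact Hm).
    assert (Hupd : forall m, (fun k => s (upd v n m k)) = upd (fun k => s (v k)) n (s m)).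
    { intro m; apply functional_extensionality; intro k; unfold upd.
      destruct (Nat.eqb k n); reflexivity. }
    split; intros [m Hm].
    + exists (t m). apply (proj1 (IH _ Hp')). rewrite Hupd, Hst. exact Hm.
    + exists (s m). rewrite <- Hupd. apply IH; auto.
Qed.

Lemma rel0_aut (s : M -> M) (E : @trel L M) : is_aut s -> countable_rel0 E ->
  forall x y, E x y -> E (fun n => s (x n)) (fun n => s (y n)).
Proof.
  intros Hs [phis [Hpf HE]] x y Hxy. rewrite HE in *. intro n.
  replace (pairv (fun k => s (x k)) (fun k => s (y k))) with (fun k => s (pairv x y k)).
  - apply sat_aut; auto.
  - apply functional_extensionality; intro k; unfold pairv; destruct (Nat.even k); auto.
Qed.

Lemma aut_inv (s : M -> M) : is_aut s ->
  exists t, is_aut t /\ (forall m, s (t m) = m) /\ (forall m, t (s m) = m).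
Proof.
  intros Hs. pose proof Hs as [[t [Hst Hts]] [Hf Hr]].
  exists t; split; auto. split; [exists s; auto|]. split.
  - intros f args. rewrite <- (Hts (fun_i M f (fun i => t (args i)))), Hf.
    f_equal. f_equal. apply functional_extensionality; intro i; auto.
  - intros r args. rewrite (Hr r (fun i => t (args i))).
    replace (fun i => s (t (args i))) with args; [tauto|].
    apply functional_extensionality; intro i; auto.
Qed.

Lemma aut_comp (s t : M -> M) : is_aut s -> is_aut t -> is_aut (fun m => s (t m)).
Proof.
  intros [[s' [H1 H2]] [Hf Hr]] [[t' [H3 H4]] [Hf' Hr']].
  split; [exists (fun m => t' (s' m)); split; intro m; congruence|]. split.
  - intros f args. rewrite Hf', Hf. reflexivity.
  - intros r args. rewrite (Hr' r args), (Hr r). tauto.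
Qed.

Lemma heq_trans (h1 h2 h3 : @Himag L M) : equiv_on (fun _ => True) (hrel h1) ->
  heq h1 h2 -> heq h2 h3 -> heq h1 h3.
Proof.
  intros [_ [_ Htrans]] [e12 r12] [e23 r23]. split; [congruence|].
  rewrite <- e12 in r23. eapply Htrans; eauto.
Qed.

Lemma heq_act_refl (s : M -> M) (h : @Himag L M) :
  is_aut s -> countable_rel0 (hrel h) -> hrel h (hrep h) (hrep h) ->
  heq (act s h) (act s h).
Proof.
  intros Hs Hc Hrefl. split; [reflexivity|]. simpl. apply (rel0_aut _ _ Hs Hc); auto.
Qed.

Lemma agree_on_definable (r s : M -> M) (Hr : is_aut r) (Hs : is_aut s)
  (I : Type) (x : I -> Himag) (Hx : forall i, countable_rel0 (hrel (x i)))
  (e : Himag) (He : is_himag e) (Hdef : definable_over {| idx := I; elt := x |} e)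
  (Hagree : forall i, heq (act r (x i)) (act s (x i))) :
  heq (act r e) (act s e).
Proof.
  destruct (aut_inv _ Hs) as [t [Ht [Hst Hts]]].
  assert (Hfix : fixes (fun m => t (r m)) e).
  { apply Hdef; [apply aut_comp; auto|]. intro i. split; [reflexivity|].
    pose proof (rel0_aut _ _ Ht (Hx i) _ _ (proj2 (Hagree i))) as H. simpl in H.
    replace (fun n => t (s (hrep (x i) n))) with (hrep (x i)) in H; auto.
    apply functional_extensionality; intro n; auto. }
  split; [reflexivity|]. simpl.
  pose proof (rel0_aut _ _ Hs (proj1 He) _ _ (proj2 Hfix)) as H. simpl in H.
  replace (fun n => s (t (r (hrep e n)))) with (fun n => r (hrep e n)) in H; auto.
  apply functional_extensionality; intro n; auto.
Qed.

Lemma same_type_empty (I : Type) (a a' : I -> @Himag L M) :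
  same_type empty_tuple a a' <->
  exists s, is_aut s /\ forall i, heq (act s (a i)) (a' i).
Proof.
  split.
  - intros [s [Hs [_ Ha]]]; exists s; auto.
  - intros [s [Hs Ha]]; exists s; split; [exact Hs | split; [intros [] | exact Ha]].
Qed.

End Automorphisms.

Section Smallness.
Variable K : Type.

Lemma lt_card_inj (T S : Type) (f : T -> S) : (forall x y, f x = f y -> x = y) ->
  lt_card S K -> lt_card T K.
Proof.
  intros Hf [[g Hg] Hn]. split.
  - exists (fun x => g (f x)). intros x y H; apply Hf, Hg, H.
  - intros [h Hh]. apply Hn. exists (fun k => f (h k)). intros x y H; apply Hh, Hf, H.
Qed.

Lemma lt_card_sub (T : Type) (P : T -> Prop) : lt_card T K -> lt_card {x | P x} K.
Proof.
  apply lt_card_inj with (f := @proj1_sig _ _).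
  intros [x px] [y py]; simpl; intro; subst. f_equal; apply proof_irrelevance.
Qed.

(* A sum of two small types is small: it is a bool-indexed sigma type. *)
Lemma lt_card_sum (I J : Type) : lt_card nat K -> regular_card K ->
  lt_card I K -> lt_card J K -> lt_card (I + J) K.
Proof.
  intros Hn Hreg HI HJ.
  pose (T := fun b : bool => if b then I else J).
  assert (Hb : lt_card bool K).
  { apply lt_card_inj with (f := fun b : bool => if b then 1 else 0); auto.
    intros [] []; simpl; congruence. }
  assert (HT : lt_card {b : bool & T b} K).
  { apply Hreg; auto. intros []; assumption. }
  apply lt_card_inj with (f := fun z => match z with
     | inl i => existT T true i | inr j => existT T false j end); auto.
  intros [i|j] [i'|j'] H;
    try discriminate (f_equal (@projT1 _ _) H);
    f_equal; exact (inj_pair2_eq_dec _ bool_dec _ _ _ _ H).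
Qed.

End Smallness.

Section ImaginarySorts.
Context {L : Language} {M : Structure L}.
Variable K : Type.

Lemma in_X_rel0 (X : @HDef L M) (h : Himag) :
  hyperdef0 X -> in_X X h -> countable_rel0 (hrel h).
Proof. intros [_ [Hc _]] [Hrel _]. rewrite Hrel. exact Hc. Qed.

Lemma in_X_refl (X : @HDef L M) (h : Himag) :
  hyperdef0 X -> in_X X h -> hrel h (hrep h) (hrep h).
Proof. intros [_ [_ [Hrefl _]]] [Hrel HZ]. rewrite Hrel. exact (Hrefl _ HZ). Qed.

Lemma heq_of_witnesses (X : @HDef L M) (Ic : Type) (c : Ic -> Himag) :
  (forall k, heq_of K X (c k)) ->
  exists (W : Ic -> Type) (x : forall k, W k -> Himag),
    (forall k, lt_card (W k) K) /\ (forall k w, in_X X (x k w)) /\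
    (forall k, definable_over {| idx := W k; elt := x k |} (c k)).
Proof.
  intros Hc.
  pose (wit := fun k => constructive_indefinite_description _ (proj2 (Hc k))).
  pose (tup := fun k => constructive_indefinite_description _ (proj2_sig (wit k))).
  exists (fun k => proj1_sig (wit k)), (fun k => proj1_sig (tup k)).
  split; [|split]; intro k; apply (proj2_sig (tup k)).
Qed.

Lemma orth_heq_of (HM : @monster L M K) (X Y : @HDef L M)
  (HX : hyperdef0 X) (HY : hyperdef0 Y)
  (Horth : orth K empty_tuple (in_X X) (in_X Y)) :
  orth K empty_tuple (heq_of K X) (heq_of K Y).
Proof.
  intros Ic Id c d HIc HId Hc Hd c' d' Hcc' Hdd'.
  destruct HM as [_ [_ [Hreg _]]].
  apply same_type_empty in Hcc' as [s [Hs Hsc]].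
  apply same_type_empty in Hdd' as [t [Ht Htd]].
  apply same_type_empty.
  destruct (heq_of_witnesses X _ c Hc) as [V [x [HV [Hx Hxc]]]].
  destruct (heq_of_witnesses Y _ d Hd) as [W [y [HW [Hy Hyd]]]].
  pose (xs := fun p : {k & V k} => x (projT1 p) (projT2 p)).
  pose (ys := fun p : {k & W k} => y (projT1 p) (projT2 p)).
  assert (Hconj : same_type empty_tuple (join xs ys)
                    (join (fun p => act s (xs p)) (fun p => act t (ys p)))).
  { apply (Horth _ _ xs ys).
    - apply Hreg; auto.
    - apply Hreg; auto.
    - intros [k w]; apply Hx.
    - intros [k w]; apply Hy.
    - apply same_type_empty. exists s; split; auto. intros [k w].
      apply heq_act_refl; auto.
      + exact (in_X_rel0 X _ HX (Hx k w)).
      + exact (in_X_refl X _ HX (Hx k w)).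
    - apply same_type_empty. exists t; split; auto. intros [k w].
      apply heq_act_refl; auto.
      + exact (in_X_rel0 Y _ HY (Hy k w)).
      + exact (in_X_refl Y _ HY (Hy k w)). }
  apply same_type_empty in Hconj as [r [Hr Hrj]].
  exists r; split; auto. intros [k|k]; simpl.
  - apply heq_trans with (act s (c k)); [exact (proj2 (proj1 (Hc k))) | | apply Hsc].
    apply (agree_on_definable _ _ Hr Hs _ (x k)).
    + intro w. exact (in_X_rel0 X _ HX (Hx k w)).
    + exact (proj1 (Hc k)).
    + exact (Hxc k).
    + intro w. exact (Hrj (inl (existT _ k w))).
  - apply heq_trans with (act t (d k)); [exact (proj2 (proj1 (Hd k))) | | apply Htd].
    apply (agree_on_definable _ _ Hr Ht _ (y k)).
    + intro w. exact (in_X_rel0 Y _ HY (Hy k w)).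
    + exact (proj1 (Hd k)).
    + exact (Hyd k).
    + intro w. exact (Hrj (inr (existT _ k w))).
Qed.

(* Adding parameters: if Xs _|_ Ys over the empty set and every element of the
   small set A lies in Xs or in Ys, then subsets of Xs and Ys remain orthogonal
   over A; the parts of A in Xs and in Ys are appended to the two tuples. *)
Lemma orth_over_parameters (HM : @monster L M K) (Xs Ys : @Himag L M -> Prop)
  (Horth : orth K empty_tuple Xs Ys)
  (A : @HTuple L M) (HAsmall : lt_card (idx A) K)
  (HA : forall i, Xs (elt A i) \/ Ys (elt A i))
  (X' Y' : @Himag L M -> Prop)
  (HX' : forall h, X' h -> Xs h) (HY' : forall h, Y' h -> Ys h) :
  orth K A X' Y'.
Proof.
  intros I J a b HI HJ Ha Hb a' b' [s [Hs [HsA Hsa]]] [t [Ht [HtA Htb]]].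
  destruct HM as [Hnat [_ [Hreg _]]].
  pose (ax := fun i : {i : idx A | Xs (elt A i)} => elt A (proj1_sig i)).
  pose (ay := fun i : {i : idx A | Ys (elt A i)} => elt A (proj1_sig i)).
  assert (Hconj : same_type empty_tuple (join (join a ax) (join b ay))
                                        (join (join a' ax) (join b' ay))).
  { apply Horth.
    - apply lt_card_sum; auto. apply lt_card_sub; auto.
    - apply lt_card_sum; auto. apply lt_card_sub; auto.
    - intros [i|[i hi]]; simpl; auto.
    - intros [j|[j hj]]; simpl; auto.
    - apply same_type_empty. exists s; split; auto.
      intros [i|[i hi]]; simpl; [apply Hsa | apply HsA].
    - apply same_type_empty. exists t; split; auto.
      intros [j|[j hj]]; simpl; [apply Htb | apply HtA]. }
  apply same_type_empty in Hconj as [r [Hr Hrj]].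
  exists r; split; [exact Hr | split].
  - intro i. destruct (HA i) as [h|h].
    + exact (Hrj (inl (inr (exist _ i h)))).
    + exact (Hrj (inr (inr (exist _ i h)))).
  - intros [i|j].
    + exact (Hrj (inl (inl i))).
    + exact (Hrj (inr (inl j))).
Qed.

End ImaginarySorts.

Theorem mainTheorem3 (L : Language) (M : Structure L) (K : Type)
  (HM : @monster L M K)
  (X Y : @HDef L M) (HX : hyperdef0 X) (HY : hyperdef0 Y)
  (Horth : orth K empty_tuple (in_X X) (in_X Y))
  (A : @HTuple L M) (HAsmall : lt_card (idx A) K)
  (HA : forall i, heq_of K X (elt A i) \/ heq_of K Y (elt A i))
  (X' Y' : @Himag L M -> Prop)
  (HX'sub : forall h, X' h -> heq_of K X h)
  (HY'sub : forall h, Y' h -> heq_of K Y h)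
  (HX'def : hyperdef_over K A X') (HY'def : hyperdef_over K A Y') :
  orth K A X' Y'.
Proof.
  apply (orth_over_parameters K HM (heq_of K X) (heq_of K Y)); auto.
  apply orth_heq_of; auto.
Qed.
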